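(* Let $\phi\in\mathrm{Aut}_0(H)$. Then for any $n\in\mathbb{Z}$ and $m\geq1$, $\phi(x^ny^m)=\alpha_{n,m}x^ny^m+h_{n,m}$ for some $\alpha_{n,m}\in k^\times$ and $h_{n,m}\in\sum_{i=0}^{m-1}H(i)$. Moreover, if $\alpha_{n,1}=1$ for all $n\in\mathbb{Z}$, then $\alpha_{n,m}=1$ for all $n\in\mathbb{Z}$ and $m\geq1$.
   Context: Let $k$ be a field and $0\neq q\in k$ not a root of unity. $H=k_q[x,x^{-1},y]$ is the $k$-algebra generated by $x,x^{-1},y$ with $xx^{-1}=x^{-1}x=1$, $yx=qxy$, a Hopf algebra with $\Delta(x)=x\otimes x$, $\Delta(x^{-1})=x^{-1}\otimes x^{-1}$, $\Delta(y)=y\otimes x+1\otimes y$, $\varepsilon(x)=1$, $\varepsilon(y)=0$; $\{x^ny^m:n\in\mathbb{Z},m\in\mathbb{N}\}$ is a $k$-basis. $H_0=\mathrm{span}\{x^n:n\in\mathbb{Z}\}$ and $H(m)=H_0y^m$. $\mathrm{Aut}_0(H)$ is the group of coalgebra automorphisms $\phi$ of $H$ with $\phi(1)=1$. *)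

From mathcomp Require Import all_boot all_algebra.
From mathcomp Require Import finmap.
From mathcomp.multinomials Require Import monalg.
Set Implicit Arguments. Unset Strict Implicit. Unset Printing Implicit Defensive.
Import GRing.Theory.
Local Open Scope ring_scope.

(* H = k_q[x, x^-1, y] is modelled as the free k-vector space on the basis
   { x^n y^m : n : int, m : nat }, the basis element x^n y^m being indexed by
   the pair (n, m).  H (x) H is the free k-vector space on pairs of basis
   indices ((n,m),(n',m')) <-> x^n y^m (x) x^n' y^m'. *)
Definition B := (int * nat)%type.
Definition Hq (k : fieldType) := {malg k[B]}.
Definition Tq (k : fieldType) := {malg k[(B * B)%type]}.

Definition e {k : fieldType} (b : B) : Hq k := << b >>.
Definition et {k : fieldType} (b c : B) : Tq k := << (b, c) >>.

(* product of basis elements in H, using yx = qxy: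
   (x^n1 y^m1)(x^n2 y^m2) = q^(m1 n2) x^(n1+n2) y^(m1+m2) *)
Definition bcoef {k : fieldType} (q : k) (b c : B) : k := q ^ (b.2%:Z * c.1)%R.
Definition bidx (b c : B) : B := (b.1 + c.1, (b.2 + c.2)%N).

(* the (bilinear) algebra product on H (x) H : (a(x)b)(c(x)d) = ac (x) bd *)
Definition tmul {k : fieldType} (q : k) (u v : Tq k) : Tq k :=
  \sum_(a <- msupp u) \sum_(b <- msupp v)
     (u@_a * v@_b * bcoef q a.1 b.1 * bcoef q a.2 b.2) *:
       et (bidx a.1 b.1) (bidx a.2 b.2).

(* Delta(y) = y (x) x + 1 (x) y *)
Definition Dy {k : fieldType} : Tq k := et (0, 1%N) (1, 0%N) + et (0, 0%N) (0, 0%N.+1).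

(* Delta(x^n y^m) = Delta(x)^n Delta(y)^m = (x^n (x) x^n) Delta(y)^m *)
Definition Delta_b {k : fieldType} (q : k) (b : B) : Tq k :=
  tmul q (et (b.1, 0%N) (b.1, 0%N)) (iter b.2 (tmul q Dy) (et (0, 0%N) (0, 0%N))).

Definition Delta {k : fieldType} (q : k) (v : Hq k) : Tq k :=
  \sum_(b <- msupp v) v@_b *: Delta_b q b.

Definition eps {k : fieldType} (v : Hq k) : k :=
  \sum_(b <- msupp v | b.2 == 0%N) v@_b.

Definition tmap {k : fieldType} (f : Hq k -> Hq k) (u : Tq k) : Tq k :=
  \sum_(a <- msupp u) u@_a *:
     \sum_(c <- msupp (f (e a.1))) \sum_(d <- msupp (f (e a.2)))
        ((f (e a.1))@_c * (f (e a.2))@_d) *: et c d.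

Definition Aut0 {k : fieldType} (q : k) (phi : Hq k -> Hq k) : Prop :=
  [/\ linear phi, bijective phi,
      (forall v, Delta q (phi v) = tmap phi (Delta q v)),
      (forall v, eps (phi v) = eps v)
    & phi (e (0, 0%N)) = e (0, 0%N)].

(* h lies in sum_{i=0}^{m-1} H(i), where H(i) = H_0 y^i = span{x^n y^i} *)
Definition lowdeg {k : fieldType} (m : nat) (h : Hq k) : Prop :=
  forall b, b \in msupp h -> (b.2 < m)%N.

From HB Require Import structures.
From mathcomp Require Import all_boot all_algebra.
From mathcomp Require Import finmap.
From mathcomp.multinomials Require Import monalg.
From mathcomp Require Import zify.
Set Implicit Arguments. Unset Strict Implicit. Unset Printing Implicit Defensive.
Import GRing.Theory.
Local Open Scope ring_scope.

(* The coproduct of a basis element is the q-binomial expansion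
     Delta(x^n y^m) = sum_i [m choose i]_q x^n y^i (x) x^(n+i) y^(m-i).
   Comparing coefficients in Delta(phi v) = (phi (x) phi)(Delta v): phi(x^n) is grouplike, hence
   a power x^s, and phi(x^n y) is (x^s, x^t)-skew-primitive, hence equal to
   b (x^s - x^t) + c x^s y with t = s + 1 as soon as c <> 0. Injectivity of phi forces c <> 0,
   and phi(1) = 1 then gives phi(x^n) = x^n. Next, the coefficient of x^a y (x) x^(a+1) y^(M-1)
   in Delta(phi(x^n y^m)) is [M choose 1]_q times the coefficient of x^a y^M in phi(x^n y^m),
   and [M choose 1]_q = (q^M - 1)/(q - 1) <> 0 since q is not a root of unity. By induction on
   m this kills every term of y-degree > m, and shows that the y^m-part of phi(x^n y^m) is
   alpha_(n,1) alpha_(n+1,m-1) x^n y^m; hence alpha_(n,m) = alpha_(n,1) ... alpha_(n+m-1,1). *)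

Section LinearExtension.
Variables (K : choiceType) (R : nzRingType) (V : lmodType R).

Definition mlin (F : K -> V) (u : {malg R[K]}) : V := \sum_(a <- msupp u) u@_a *: F a.

Lemma mlinEw (F : K -> V) (u : {malg R[K]}) (d : {fset K}) :
  (msupp u `<=` d)%fset -> mlin F u = \sum_(a <- d) u@_a *: F a.
Proof.
move=> le; rewrite /mlin (big_fset_incl _ le) //= => a _ /mcoeff_outdom ->.
by rewrite scale0r.
Qed.

Lemma mlin_is_linear (F : K -> V) : linear (mlin F).
Proof.
move=> c u v; pose d := (msupp u `|` msupp v)%fset.
have le_cu : (msupp (c *: u + v) `<=` d)%fset.
  exact: fsubset_trans (msuppD_le _ _) (fsetSU _ (msuppZ_le _ _)).
rewrite (mlinEw F le_cu) (mlinEw F (fsubsetUl _ (msupp v))).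
rewrite (mlinEw F (fsubsetUr (msupp u) _)).
rewrite scaler_sumr -big_split /=; apply: eq_bigr => a _.
by rewrite mcoeffD mcoeffZ scalerDl scalerA.
Qed.

HB.instance Definition _ F := GRing.isLinear.Build R {malg R[K]} V *:%R (mlin F)
  (mlin_is_linear F).

Lemma mlinU (F : K -> V) (a : K) : mlin F << a >> = F a.
Proof. by rewrite (mlinEw _ msuppU_le) big_seq_fset1 mcoeffUU scale1r. Qed.

Lemma mlin_sumZU (I : Type) (r : seq I) (P : pred I) (F : K -> V) (c : I -> R) (a : I -> K) :
  mlin F (\sum_(i <- r | P i) c i *: << a i >>) = \sum_(i <- r | P i) c i *: F (a i).
Proof. by rewrite raddf_sum; apply: eq_bigr => i _; rewrite /= linearZ /= mlinU. Qed.

End LinearExtension.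

Section MalgCoefficients.
Variables (K : choiceType) (R : nzRingType).

Lemma big_msupp_single (u : {malg R[K]}) (a0 : K) (F : K -> R) :
  (forall a, a != a0 -> F a = 0) -> \sum_(a <- msupp u) u@_a * F a = u@_a0 * F a0.
Proof.
move=> F0; have [a0u|a0Nu] := boolP (a0 \in msupp u).
  rewrite (big_fsetD1 a0) //= big1_fset ?addr0 // => a.
  by rewrite in_fsetD1 => /andP [ne _] _; rewrite F0 ?mulr0.
rewrite (mcoeff_outdom a0Nu) mul0r big1_fset // => a au _; rewrite F0 ?mulr0 //.
by apply: contraNneq a0Nu => <-.
Qed.

Lemma mcoeff_mlin (K' : choiceType) (F : K -> {malg R[K']}) u x :
  (mlin F u)@_x = \sum_(a <- msupp u) u@_a * (F a)@_x.
Proof.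
by rewrite /mlin raddf_sum; apply: eq_bigr => a _; rewrite /= mcoeffZ.
Qed.

Lemma malg_neq0_mcoeff (u : {malg R[K]}) : u != 0 -> exists a, u@_a != 0.
Proof.
move=> u_neq0; have /fset0Pn [a] : msupp u != fset0.
  apply: contra u_neq0 => /eqP supp0; apply/eqP/malgP => a.
  by rewrite mcoeff0 mcoeff_outdom // supp0 in_fset0.
by rewrite -mcoeff_neq0; exists a.
Qed.

End MalgCoefficients.

(* [qbinom], [tensor] and [phi_coef] are locked: when a rewrite compares two distinct
   instances, conversion would otherwise unfold them into finitely supported sums, which is
   prohibitively slow. *)
HB.lock Definition qbinom (k : nzRingType) (q : k) : nat -> nat -> k :=
  fix qbinom m i :=
    if m is m'.+1 then (if i is i'.+1 then qbinom m' i' else 0) + q ^+ i * qbinom m' i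
    else (i == 0)%:R.

Section QBinomial.
Variables (k : comNzRingType) (q : k).

Lemma qbinom0 i : qbinom q 0 i = (i == 0)%:R.
Proof. by rewrite unlock. Qed.

Lemma qbinomS m i :
  qbinom q m.+1 i = (if i is i'.+1 then qbinom q m i' else 0) + q ^+ i * qbinom q m i.
Proof. by rewrite unlock. Qed.

Lemma qbinom_gt m i : (m < i)%N -> qbinom q m i = 0.
Proof.
elim: m i => [|m IH] [|i] // lt_mi; first by rewrite qbinom0.
by rewrite qbinomS !IH ?mulr0 ?addr0 // ltnW.
Qed.

Lemma qbinomn0 m : qbinom q m 0 = 1.
Proof. by elim: m => [|m IH]; rewrite ?qbinom0 // qbinomS IH add0r mul1r. Qed.

Lemma qbinomnn m : qbinom q m m = 1.
Proof.
by elim: m => [|m IH]; rewrite ?qbinom0 // qbinomS IH qbinom_gt ?mulr0 ?addr0.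
Qed.

Lemma qbinom1 m : (q - 1) * qbinom q m 1 = q ^+ m - 1.
Proof.
elim: m => [|m IH]; first by rewrite qbinom0 mulr0 expr0 subrr.
rewrite qbinomS qbinomn0 expr1 mulrDr mulr1 mulrCA IH exprS mulrBr mulr1.
by rewrite addrC addrA subrK.
Qed.

Lemma qbinom1_neq0 m : q ^+ m != 1 -> qbinom q m 1 != 0.
Proof. by apply: contraNneq => C0; rewrite -subr_eq0 -qbinom1 C0 mulr0. Qed.

Lemma qbinom_pascal_sum (V : lmodType k) (f : nat -> nat -> V) m :
  \sum_(i < m.+2) qbinom q m.+1 i *: f i (m.+1 - i)%N =
  \sum_(i < m.+1) qbinom q m i *: f i.+1 (m - i)%N +
  \sum_(i < m.+1) (qbinom q m i * q ^+ i) *: f i (m - i).+1.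
Proof.
under eq_bigr do rewrite qbinomS scalerDl.
rewrite big_split /= [X in X + _ = _]big_ord_recl [X in _ + X = _]big_ord_recr /=.
rewrite scale0r add0r qbinom_gt // mulr0 scale0r addr0.
by congr (_ + _); apply: eq_bigr => i _; rewrite mulrC subSn // -ltnS.
Qed.

End QBinomial.

HB.lock Definition tensor (k : fieldType) (u v : Hq k) : Tq k :=
  \sum_(c <- msupp u) \sum_(d <- msupp v) (u@_c * v@_d) *: et c d.

Section Coproduct.
Variables (k : fieldType) (q : k).
Implicit Types u v : Hq k.

Lemma mcoeff_e (b c : B) : (e b : Hq k)@_c = (b == c)%:R.
Proof. by rewrite /e mcoeffU. Qed.

Lemma e_inj : injective (@e k).
Proof.
move=> b c /malgP/(_ c); rewrite !mcoeff_e eqxx.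
by case: eqP => // _ /esym/eqP; rewrite oner_eq0.
Qed.

Lemma e_neq0 b : e b != 0 :> Hq k.
Proof.
by apply/eqP => /malgP/(_ b)/eqP; rewrite mcoeff_e eqxx mcoeff0 oner_eq0.
Qed.

Lemma mcoeffZe c (b x : B) : (c *: e b : Hq k)@_x = c * (b == x)%:R.
Proof. by rewrite mcoeffZ mcoeff_e. Qed.

Lemma mcoeff_et (b c : B) x : (et b c : Tq k)@_x = ((b, c) == x)%:R.
Proof. by rewrite /et mcoeffU. Qed.

Lemma mlin_et (V : lmodType k) (F : B * B -> V) b c : mlin F (et b c) = F (b, c).
Proof. exact: mlinU. Qed.

Lemma mlin_sum_et (V : lmodType k) (I : Type) (r : seq I) (P : pred I)
    (F : B * B -> V) (c : I -> k) (a b : I -> B) :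
  mlin F (\sum_(i <- r | P i) c i *: et (a i) (b i)) = \sum_(i <- r | P i) c i *: F (a i, b i).
Proof. exact: mlin_sumZU. Qed.

Lemma tensorE u v : tensor u v = mlin (fun c => mlin (et c) v) u.
Proof.
rewrite unlock; apply: eq_bigr => c _; rewrite scaler_sumr.
by apply: eq_bigr => d _; rewrite scalerA.
Qed.

Lemma mcoeff_tensor u v c d : (tensor u v)@_(c, d) = u@_c * v@_d.
Proof.
rewrite tensorE mcoeff_mlin (big_msupp_single _ (a0 := c)) => [|c' ne_c'c].
  rewrite mcoeff_mlin (big_msupp_single _ (a0 := d)) => [|d' ne_d'd].
    by rewrite mcoeff_et eqxx mulr1.
  by rewrite mcoeff_et xpair_eqE eqxx (negbTE ne_d'd).
rewrite mcoeff_mlin big1_seq // => d' _.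
by rewrite mcoeff_et xpair_eqE (negbTE ne_c'c) mulr0.
Qed.

Lemma tmapE (f : Hq k -> Hq k) (w : Tq k) :
  tmap f w = mlin (fun a => tensor (f (e a.1)) (f (e a.2))) w.
Proof. by rewrite unlock. Qed.

Definition tmul_basis (a b : B * B) : Tq k :=
  (bcoef q a.1 b.1 * bcoef q a.2 b.2) *: et (bidx a.1 b.1) (bidx a.2 b.2).

Lemma tmulE (w1 w2 : Tq k) : tmul q w1 w2 = mlin (fun a => mlin (tmul_basis a) w2) w1.
Proof.
apply: eq_bigr => a _; rewrite scaler_sumr; apply: eq_bigr => b _.
by rewrite scalerA /tmul_basis scalerA !mulrA.
Qed.

Lemma tmul_et a b (w : Tq k) : tmul q (et a b) w = mlin (tmul_basis (a, b)) w.
Proof. by rewrite tmulE mlin_et. Qed.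

Lemma tmul_basis_yx i j :
  tmul_basis ((0, 1%N), (1, 0%N)) ((0, i), (i%:Z, j)) = et (0, i.+1) (i.+1%:Z, j).
Proof.
by rewrite /tmul_basis /bcoef /bidx /= mulr0 mul0r expr0z mulr1 scale1r add0r add0n -intS.
Qed.

Lemma tmul_basis_1y i j :
  tmul_basis ((0, 0%N), (0, 1%N)) ((0, i), (i%:Z, j)) = q ^+ i *: et (0, i) (i%:Z, j.+1).
Proof.
by rewrite /tmul_basis /bcoef /bidx /= mulr0 expr0z !mul1r -exprnP !add0r add1n.
Qed.

Lemma tmul_basis_x i j (n : int) :
  tmul_basis ((n, 0%N), (n, 0%N)) ((0, i), (i%:Z, j)) = et (n, i) (n + i%:Z, j).
Proof. by rewrite /tmul_basis /bcoef /bidx /= !mul0r expr0z mulr1 scale1r addr0. Qed.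

Lemma tmulDl (w1 w2 w : Tq k) : tmul q (w1 + w2) w = tmul q w1 w + tmul q w2 w.
Proof. by rewrite !tmulE linearD. Qed.

Lemma Dy_iterE m :
  iter m (tmul q Dy) (et (0, 0%N) (0, 0%N)) =
  \sum_(i < m.+1) qbinom q m i *: et (0, i : nat) (i%:Z, (m - i)%N).
Proof.
elim: m => [|m IH]; first by rewrite big_ord1 qbinomn0 scale1r.
rewrite iterS IH /Dy tmulDl [X in X + _]tmul_et [X in _ + X]tmul_et.
rewrite [X in X + _]mlin_sum_et [X in _ + X]mlin_sum_et.
under [X in X + _]eq_bigr do rewrite tmul_basis_yx.
under [X in _ + X = _]eq_bigr do rewrite tmul_basis_1y scalerA.
by rewrite (qbinom_pascal_sum q (fun i j => et (0, i) (i%:Z, j))).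
Qed.

Lemma Delta_b_e b : Delta_b q b = Delta q (e b).
Proof. exact/esym/(mlinU (Delta_b q)). Qed.

Lemma Delta_e n m :
  Delta q (e (n, m)) = \sum_(i < m.+1) qbinom q m i *: et (n, i : nat) (n + i%:Z, (m - i)%N).
Proof.
rewrite -Delta_b_e /Delta_b Dy_iterE tmul_et mlin_sum_et.
by apply: eq_bigr => i _; rewrite tmul_basis_x.
Qed.

Lemma mcoeff_Delta v p r :
  (Delta q v)@_(p, r) =
  if r.1 == p.1 + p.2%:Z then qbinom q (p.2 + r.2) p.2 * v@_(p.1, (p.2 + r.2)%N) else 0.
Proof.
have coefE b : (Delta_b q b)@_(p, r) =
    \sum_(i < b.2.+1) qbinom q b.2 i *
      (((b.1, i : nat), (b.1 + i%:Z, (b.2 - i)%N)) == (p, r))%:R.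
  by rewrite Delta_b_e [b]surjective_pairing Delta_e raddf_sum; apply: eq_bigr => i _;
     rewrite /= mcoeffZ mcoeff_et.
case: p r coefE => [a i] [c j] /= coefE.
rewrite (mcoeff_mlin _ _ ((a, i), (c, j))) (big_msupp_single _ (a0 := (a, (i + j)%N))).
  rewrite coefE (bigD1 (Ordinal (leq_addr j i : (i < (i + j).+1)%N))) //=.
  rewrite big1 => [|l ne_li].
    rewrite addKn addr0 !xpair_eqE !eqxx /= andbT eq_sym.
    by case: (c == a + i%:Z); rewrite ?mulr1 ?mulr0 // mulrC.
  rewrite !xpair_eqE (_ : (l == i :> nat) = false) ?andbF ?mulr0 //.
  by apply/negbTE; move: ne_li; rewrite -val_eqE.
move=> [n m] ne_nm; rewrite coefE big1 // => l _ /=.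
case: eqP => [[en el _ em]|]; last by rewrite mulr0.
move: ne_nm; rewrite -en -el xpair_eqE eqxx /=.
by have := ltn_ord l; rewrite -em ltnS => /subnKC ->; rewrite eqxx.
Qed.

Lemma tmap_Delta_e (f : Hq k -> Hq k) n m :
  tmap f (Delta q (e (n, m))) =
  \sum_(i < m.+1) qbinom q m i *: tensor (f (e (n, i : nat))) (f (e (n + i%:Z, (m - i)%N))).
Proof.
by rewrite tmapE Delta_e mlin_sum_et.
Qed.

Lemma grouplike_e (v : Hq k) :
  Delta q v = tensor v v -> v != 0 -> exists s, v = e (s, 0%N).
Proof.
move=> Dv v_neq0.
have coefD a i c j : (if c == a + i%:Z then qbinom q (i + j) i * v@_(a, (i + j)%N) else 0) =
    v@_(a, i) * v@_(c, j).
  by rewrite -mcoeff_tensor -Dv mcoeff_Delta.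
have high a M : (0 < M)%N -> v@_(a, M) = 0.
  move=> M_gt0; apply/eqP; rewrite -[_ == 0]orbb -mulf_eq0 -coefD.
  by have /negbTE -> : a != a + M%:Z by apply/eqP; lia.
have idem a : v@_(a, 0%N) * v@_(a, 0%N) = v@_(a, 0%N).
  by rewrite -coefD addr0 eqxx qbinomn0 mul1r.
have orth a c : a != c -> v@_(a, 0%N) * v@_(c, 0%N) = 0.
  by rewrite -coefD addr0 eq_sym => /negbTE ->.
have [[s M] vsM] := malg_neq0_mcoeff v_neq0.
have M0 : M = 0%N by apply/eqP; apply: contraNT vsM; rewrite -lt0n => /high ->.
subst M; have vs1 : v@_(s, 0%N) = 1.
  by apply: (mulfI vsM); rewrite idem mulr1.
exists s; apply/malgP => [[a M]]; rewrite mcoeff_e xpair_eqE.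
case: M => [|M]; last by rewrite high // andbF.
rewrite eqxx andbT; have [<-|ne_sa] := eqVneq s a; first by rewrite vs1.
by rewrite -[v@__]mul1r -vs1 orth.
Qed.

End Coproduct.

Section SkewPrimitive.
Variables (k : fieldType) (q : k).
Hypothesis q_nonroot : forall n : nat, (0 < n)%N -> q ^+ n != 1.
Variables (v : Hq k) (s t : int).
Hypothesis ne_st : s != t.
Hypothesis Dv : Delta q v = tensor (e (s, 0%N)) v + tensor v (e (t, 0%N)).

Lemma skew_coef a i c j :
  (if c == a + i%:Z then qbinom q (i + j) i * v@_(a, (i + j)%N) else 0) =
  ((s, 0%N) == (a, i))%:R * v@_(c, j) + v@_(a, i) * ((t, 0%N) == (c, j))%:R.
Proof. by rewrite -!mcoeff_e -!mcoeff_tensor -mcoeffD -Dv mcoeff_Delta. Qed.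

Lemma skew_coef_gt1 a M : (1 < M)%N -> v@_(a, M) = 0.
Proof.
move=> M_gt1; have := skew_coef a 1%N (a + 1) M.-1.
rewrite eqxx add1n prednK ?(ltnW M_gt1) // !xpair_eqE andbF mul0r add0r.
rewrite (_ : (0%N == M.-1) = false) ?andbF ?mulr0; last by apply/eqP; lia.
by move/eqP; rewrite mulf_eq0 (negbTE (qbinom1_neq0 (q_nonroot (ltnW M_gt1)))) => /eqP.
Qed.

Lemma skew_coef1_src a : v@_(a, 1%N) != 0 -> a = s.
Proof.
move=> va1; apply/eqP; apply: contraNT va1 => ne_as.
have := skew_coef a 0%N a 1%N; rewrite addr0 eqxx qbinomn0 mul1r !xpair_eqE eq_sym.
by rewrite (negbTE ne_as) andbF mul0r add0r mulr0 => ->.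
Qed.

Lemma skew_coef1_tgt a : v@_(a, 1%N) != 0 -> t = a + 1.
Proof.
move=> va1; apply/eqP; apply: contraNT va1 => ne_t.
have := skew_coef a 1%N (a + 1) 0%N; rewrite eqxx qbinomnn mul1r !xpair_eqE andbF.
by rewrite mul0r add0r andbT (negbTE ne_t) mulr0 addn0 => ->.
Qed.

Lemma skew_coef0 a : a != s -> a != t -> v@_(a, 0%N) = 0.
Proof.
move=> ne_as ne_at; have := skew_coef a 0%N a 0%N.
rewrite addr0 eqxx qbinomn0 mul1r !xpair_eqE !andbT !(eq_sym _ a).
by rewrite (negbTE ne_as) (negbTE ne_at) mul0r mulr0 addr0.
Qed.

Lemma skew_coef0_tgt : v@_(t, 0%N) = - v@_(s, 0%N).
Proof.
have ne_ts : t != s by rewrite eq_sym.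
have := skew_coef s 0%N t 0%N; rewrite addr0 (negbTE ne_ts) !eqxx mul1r mulr1 => /eqP.
by rewrite eq_sym addr_eq0 => /eqP.
Qed.

Lemma skew_primitive_e :
  v = v@_(s, 0%N) *: (e (s, 0%N) - e (t, 0%N)) + v@_(s, 1%N) *: e (s, 1%N) /\
  (v@_(s, 1%N) != 0 -> t = s + 1).
Proof.
split; last exact: skew_coef1_tgt.
apply/malgP => -[a M]; rewrite scalerBr [in RHS]mcoeffD [in RHS]mcoeffB.
rewrite [X in X - _]mcoeffZe [X in _ - X]mcoeffZe [X in _ + X]mcoeffZe !xpair_eqE.
case: M => [|[|M]].
- rewrite andbF mulr0 addr0 !andbT; have [<-|ne_sa] := eqVneq s a.
    by rewrite eq_sym (negbTE ne_st) mulr0 subr0 mulr1.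
  have [<-|ne_ta] := eqVneq t a; first by rewrite mulr0 sub0r mulr1 skew_coef0_tgt.
  by rewrite !mulr0 subrr skew_coef0 // eq_sym.
- rewrite !andbF andbT !mulr0 subrr add0r; have [<-|ne_sa] := eqVneq s a.
    by rewrite mulr1.
  by rewrite mulr0; apply/eqP; apply: contraNT ne_sa => /skew_coef1_src ->.
- by rewrite !andbF !mulr0 subrr addr0 skew_coef_gt1.
Qed.

End SkewPrimitive.

HB.lock Definition phi_coef (k : fieldType) (phi : Hq k -> Hq k) (b x : B) : k :=
  (phi (e b))@_x.

Section Automorphism.
Variables (k : fieldType) (q : k).
Hypothesis q_nonroot : forall n : nat, (0 < n)%N -> q ^+ n != 1.
Variable phi : Hq k -> Hq k.
Hypothesis phi_aut : Aut0 q phi.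

Local Notation phic := (phi_coef phi).

Lemma phi_coefE b x : phic b x = (phi (e b))@_x.
Proof. by rewrite unlock. Qed.

Let phi_linear : linear phi. Proof. by case: phi_aut. Qed.

Lemma phiB u v : phi (u - v) = phi u - phi v.
Proof. exact: (zmod_morphism_linear phi_linear). Qed.

Lemma phiZ a u : phi (a *: u) = a *: phi u.
Proof. exact: (scalable_linear phi_linear). Qed.

Lemma phi0 : phi 0 = 0.
Proof. by have := phiB 0 0; rewrite subr0 subrr. Qed.

Lemma phi_inj : injective phi.
Proof. by case: phi_aut => _ /bij_inj. Qed.

Lemma Delta_phi_e n m :
  Delta q (phi (e (n, m))) =
  \sum_(i < m.+1) qbinom q m i *: tensor (phi (e (n, i : nat))) (phi (e (n + i%:Z, (m - i)%N))).
Proof. by case: phi_aut => _ _ Dphi _ _; rewrite Dphi tmap_Delta_e. Qed.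

Lemma phic_Delta n m a i c j :
  (if c == a + i%:Z then qbinom q (i + j) i * phic (n, m) (a, (i + j)%N) else 0) =
  \sum_(l < m.+1) qbinom q m l * phic (n, l : nat) (a, i) * phic (n + l%:Z, (m - l)%N) (c, j).
Proof.
rewrite !phi_coefE; have := congr1 (mcoeff ((a, i), (c, j))) (Delta_phi_e n m).
rewrite mcoeff_Delta /= => ->; rewrite raddf_sum; apply: eq_bigr => l _.
by rewrite /= mcoeffZ mcoeff_tensor mulrA !phi_coefE.
Qed.

Lemma Delta_phi_x n : Delta q (phi (e (n, 0%N))) = tensor (phi (e (n, 0%N))) (phi (e (n, 0%N))).
Proof. by rewrite Delta_phi_e big_ord1 qbinomn0 scale1r addr0. Qed.

Lemma phi_x_grouplike n : exists s, phi (e (n, 0%N)) = e (s, 0%N).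
Proof.
apply: grouplike_e (Delta_phi_x n) _.
apply: contra_neq (e_neq0 k (n, 0%N)) => phi_x0.
by apply: phi_inj; rewrite phi0.
Qed.

Lemma Delta_phi_xy n :
  Delta q (phi (e (n, 1%N))) =
  tensor (phi (e (n, 0%N))) (phi (e (n, 1%N))) + tensor (phi (e (n, 1%N))) (phi (e (n + 1, 0%N))).
Proof.
by rewrite Delta_phi_e big_ord_recr big_ord1 /= qbinomn0 qbinomnn !scale1r (addr0 n).
Qed.

Lemma phi_x_shift n s t :
  phi (e (n, 0%N)) = e (s, 0%N) -> phi (e (n + 1, 0%N)) = e (t, 0%N) ->
  t = s + 1 /\ phic (n, 1%N) (s, 1%N) != 0.
Proof.
move=> phi_n phi_n1; have ne_st : s != t.
  apply/eqP => est; have /e_inj[] : e (n, 0%N) = e (n + 1, 0%N) :> Hq k.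
    by apply: phi_inj; rewrite phi_n phi_n1 est.
  lia.
have Dv : Delta q (phi (e (n, 1%N))) =
    tensor (e (s, 0%N)) (phi (e (n, 1%N))) + tensor (phi (e (n, 1%N))) (e (t, 0%N)).
  by rewrite Delta_phi_xy; congr (tensor _ _ + tensor _ _).
have [phi_xy lead] := skew_primitive_e q_nonroot ne_st Dv.
rewrite phi_coefE; suff nz : (phi (e (n, 1%N)))@_(s, 1%N) != 0 by split; [exact: lead|].
apply/eqP => z; move: phi_xy; rewrite z scale0r addr0 -phi_n -phi_n1 -phiB -phiZ.
move=> /phi_inj/(congr1 (mcoeff (n, 1%N))); rewrite mcoeff_e eqxx mcoeffZ mcoeffB !mcoeff_e.
by rewrite !xpair_eqE !andbF subrr mulr0 => /eqP; rewrite oner_eq0.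
Qed.

Lemma phi_x_up n : phi (e (n, 0%N)) = e (n, 0%N) -> phi (e (n + 1, 0%N)) = e (n + 1, 0%N).
Proof.
move=> phi_n; have [t phi_t] := phi_x_grouplike (n + 1).
by have [t_eq _] := phi_x_shift phi_n phi_t; rewrite phi_t t_eq.
Qed.

Lemma phi_x_down n : phi (e (n + 1, 0%N)) = e (n + 1, 0%N) -> phi (e (n, 0%N)) = e (n, 0%N).
Proof.
move=> phi_n1; have [s phi_s] := phi_x_grouplike n.
by have [/addIr s_eq _] := phi_x_shift phi_s phi_n1; rewrite phi_s s_eq.
Qed.

Lemma phi_x n : phi (e (n, 0%N)) = e (n, 0%N).
Proof.
elim/int_rect: n => [|n IH|n IH]; first by case: phi_aut.
  by rewrite intS addrC; apply: phi_x_up.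
by apply: phi_x_down; rewrite (_ : - n.+1%:Z + 1 = - n%:Z) //; lia.
Qed.

Lemma phic_x n b : phic (n, 0%N) b = ((n, 0%N) == b)%:R.
Proof. by rewrite phi_coefE phi_x mcoeff_e. Qed.

Lemma phic_above m n a M : (m < M)%N -> phic (n, m) (a, M) = 0.
Proof.
elim/ltn_ind: m n a M => -[_|m IH] n a M lt_mM.
  by rewrite phic_x xpair_eqE (_ : (0 == M)%N = false) ?andbF //; lia.
have := phic_Delta n m.+1 a 1 (a + 1) M.-1.
rewrite big1 => [|l _]; last first.
  have [->|l_gt0] := posnP l; first by rewrite (IH 0%N) // mulr0 mul0r.
  by rewrite (IH (m.+1 - l)%N) ?mulr0 //; have := ltn_ord l; lia.
rewrite eqxx add1n prednK; last by lia.
move/eqP; rewrite mulf_eq0 (negbTE (qbinom1_neq0 (q_nonroot _))) /=; last by lia.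
by move/eqP.
Qed.

Lemma phic_top m n a :
  phic (n, m.+1) (a, m.+1) = phic (n, 1%N) (a, 1%N) * phic (n + 1, m) (a + 1, m).
Proof.
have := phic_Delta n m.+1 a 1 (a + 1) m.
rewrite eqxx add1n 2!big_ord_recl /= /bump /= (@phic_above 0%N n a 1%N) //.
rewrite mulr0 mul0r add0r big1 ?addr0 => [|l _]; last first.
  by rewrite [X in _ * X]phic_above ?mulr0 //; have := ltn_ord l; lia.
rewrite add1n subSS subn0 -mulrA => /(mulfI (qbinom1_neq0 (q_nonroot _))) -> //.
Qed.

Lemma phic_offdiag m n a : a != n -> phic (n, m) (a, m) = 0.
Proof.
move=> ne_an; have ne_na : (n == a) = false by apply/negbTE; rewrite eq_sym.
case: m => [|m]; first by rewrite phic_x xpair_eqE ne_na.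
rewrite phic_top; suff -> : phic (n, 1%N) (a, 1%N) = 0 by rewrite mul0r.
have := phic_Delta n 1 a 0 a 1; rewrite addr0 eqxx qbinomn0 mul1r big_ord_recr big_ord1 /=.
by rewrite !phic_x !xpair_eqE ne_na andbF !mulr0 mul0r addr0.
Qed.

Definition phi_diag n m := phic (n, m) (n, m).

Lemma phi_diag0 n : phi_diag n 0 = 1.
Proof. by rewrite /phi_diag phic_x eqxx. Qed.

Lemma phi_diagS n m : phi_diag n m.+1 = phi_diag n 1 * phi_diag (n + 1) m.
Proof. exact: phic_top. Qed.

Lemma phi_diag_neq0 n m : phi_diag n m != 0.
Proof.
elim: m n => [|m IH] n; first by rewrite phi_diag0 oner_neq0.
rewrite phi_diagS mulf_neq0 //.
by have [_] := phi_x_shift (phi_x n) (phi_x (n + 1)).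
Qed.

Lemma phi_diag_eq1 : (forall n, phi_diag n 1 = 1) -> forall n m, phi_diag n m = 1.
Proof.
by move=> diag1 n m; elim: m n => [|m IH] n; rewrite ?phi_diag0 // phi_diagS diag1 IH mul1r.
Qed.

Lemma lowdeg_phi_e n m : lowdeg m (phi (e (n, m)) - phi_diag n m *: e (n, m)).
Proof.
move=> [a M]; rewrite -mcoeff_neq0 mcoeffB mcoeffZ mcoeff_e -phi_coefE xpair_eqE /=.
apply: contraR; rewrite -leqNgt leq_eqVlt => /orP [/eqP <-|lt_mM].
  rewrite eqxx andbT; have [<-|ne_na] := eqVneq n a; first by rewrite mulr1 subrr.
  by rewrite phic_offdiag 1?eq_sym // mulr0 subrr.
by rewrite phic_above // (_ : (m == M) = false) ?andbF ?mulr0 ?subrr //; lia.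
Qed.

End Automorphism.

Theorem lemma2p9 (k : fieldType) (q : k)
  (hq0 : q != 0) (hqroot : forall n : nat, (0 < n)%N -> q ^+ n != 1)
  (phi : Hq k -> Hq k) (hphi : Aut0 q phi) :
  (forall (n : int) (m : nat), (1 <= m)%N ->
     exists alpha : k, alpha != 0 /\
       exists h : Hq k, lowdeg m h /\ phi (e (n, m)) = alpha *: e (n, m) + h)
  /\
  ((forall n : int, exists h : Hq k,
       lowdeg 1 h /\ phi (e (n, 1%N)) = 1 *: e (n, 1%N) + h) ->
   forall (n : int) (m : nat), (1 <= m)%N ->
     exists h : Hq k, lowdeg m h /\ phi (e (n, m)) = 1 *: e (n, m) + h).
Proof.
have triangular n m : lowdeg m (phi (e (n, m)) - phi_diag phi n m *: e (n, m)).
  exact: (@lowdeg_phi_e _ _ hqroot _ hphi n m).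
split=> [n m _|diag1 n m _].
  exists (phi_diag phi n m); split; first exact: (phi_diag_neq0 hqroot hphi).
  exists (phi (e (n, m)) - phi_diag phi n m *: e (n, m)).
  by split; [exact: triangular | rewrite addrC subrK].
have {}diag1 n' : phi_diag phi n' 1 = 1.
  have [h [low_h phi_n']] := diag1 n'.
  rewrite /phi_diag phi_coefE phi_n' mcoeffD mcoeffZe eqxx mulr1 mcoeff_outdom ?addr0 //.
  by apply/negP => /low_h.
exists (phi (e (n, m)) - 1 *: e (n, m)); split; last by rewrite addrC subrK.
by rewrite -{1}(phi_diag_eq1 hqroot hphi diag1 n m).
Qed.
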